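(* Let $C,\le$ and $\widetilde C,\le'$ satisfy: $C\subset Ob(CC(R,LM))$ is closed under $ft$; $\le$ is a transitive relation on $C$ with $\Gamma\le\Gamma'\Rightarrow l(\Gamma)=l(\Gamma')$ and, for $\Gamma,F\in C$ with $ft(\Gamma)\le F$, $\sigma(\Gamma,F)\in C$ and $\Gamma\le\sigma(\Gamma,F)$; $\widetilde C\subset\widetilde{Ob}(CC(R,LM))$; $\le'$ is a transitive relation on $\widetilde C$ with $\mathcal J\le'\mathcal J'\Rightarrow\partial\mathcal J\le\partial\mathcal J'$ and, for $\mathcal J\in\widetilde C$, $F\in C$ with $\partial\mathcal J\le F$, $\widetilde\sigma(\mathcal J,F)\in\widetilde C$ and $\mathcal J\le'\widetilde\sigma(\mathcal J,F)$. Then: (1) $(\Gamma\vdash o:T)\le'(\Gamma\vdash o':T)$ and $(\Gamma,T)\le(\Gamma',T')$ imply $(\Gamma\vdash o:T)\le'(\Gamma'\vdash o':T')$; (2) if moreover $\le$ is symmetric, then $(\Gamma\vdash o:T)\le'(\Gamma'\vdash o':T')$ implies $(\Gamma\vdash o:T)\le'(\Gamma\vdash o':T)$.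
   Context: $[n]=\{1,\dots,n\}$; $R$ monad on Sets, $LM$ a left $R$-module with values in Sets. $Ob(CC(R,LM))$: sequences $(T_1,\dots,T_n)$, $T_j\in LM([j-1])$; $l$ = length; $ft$ drops the last entry; $(\Gamma,T)$ is $\Gamma$ extended by $T$. $\widetilde{Ob}(CC(R,LM))$: elements written $(\Gamma\vdash t:T)$ with $\Gamma=(T_1,\dots,T_n)$ an object, $T\in LM([n])$, $t\in R([n])$; $\partial(\Gamma\vdash t:T)=(\Gamma,T)$. $\sigma((T_1,\dots,T_{n+k}),(T'_1,\dots,T'_n))=(T'_1,\dots,T'_n,T_{n+1},\dots,T_{n+k})$ for $k>0$. For $\mathcal J=(T_1,\dots,T_{n+k-1}\vdash t:T_{n+k})$, $\Gamma'=(T'_1,\dots,T'_n)$, $n\ge1,k\ge0$: $\widetilde\sigma(\mathcal J,\Gamma')=(T'_1,\dots,T'_n,T_{n+1},\dots,T_{n+k-1}\vdash t:T_{n+k})$ if $k>0$, and $(T'_1,\dots,T'_{n-1}\vdash t:T'_n)$ if $k=0$. *)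

From mathcomp Require Import all_boot.
Set Implicit Arguments. Unset Strict Implicit. Unset Printing Implicit Defensive.

Record monad := Monad {
  mon :> Type -> Type;
  ret : forall X, X -> mon X;
  bind : forall X Y, mon X -> (X -> mon Y) -> mon Y;
  bind_retl : forall X Y (x : X) (f : X -> mon Y), bind (ret x) f = f x;
  bind_retr : forall X (m : mon X), bind m (@ret X) = m;
  bind_assoc : forall X Y Z (m : mon X) (f : X -> mon Y) (g : Y -> mon Z),
      bind (bind m f) g = bind m (fun x => bind (f x) g) }.

Record lmodule (R : monad) := LModule {
  lmod :> Type -> Type;
  mbind : forall X Y, lmod X -> (X -> R Y) -> lmod Y;
  mbind_ret : forall X (m : lmod X), mbind m (@ret R X) = m;
  mbind_assoc : forall X Y Z (m : lmod X) (f : X -> R Y) (g : Y -> R Z),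
      mbind (mbind m f) g = mbind m (fun x => bind (f x) g) }.

Section CC.
Variables (R : monad) (LM : lmodule R).

(* [n] = 'I_n.  An entry T_j \in LM([j-1]) is stored as the tagged value
   (j-1 ; T_j); a raw context is a list of such entries. *)
Definition LMt := {j : nat & LM 'I_j}.
Definition Rt := {j : nat & R 'I_j}.

(* Ob(CC(R,LM)): lists whose i-th entry (0-based) lies in LM([i]). *)
Definition is_ob (G : seq LMt) : Prop := map tag G = iota 0 (size G).

Definition len (G : seq LMt) : nat := size G.
Definition ft (G : seq LMt) : seq LMt := take (size G).-1 G.
Definition ext (G : seq LMt) (T : LMt) : seq LMt := rcons G T.

Definition sigma (G F : seq LMt) : seq LMt := F ++ drop (size F) G.

(* Judgements (Gamma |- t : T) : context, term, type. *)
Definition Jdg := (seq LMt * Rt * LMt)%type.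
Definition is_jdg (J : Jdg) : Prop :=
  let: (G, t, T) := J in is_ob G /\ tag t = size G /\ tag T = size G.
Definition mkJ n (G : seq LMt) (t : R 'I_n) (T : LM 'I_n) : Jdg :=
  (G, existT _ n t, existT _ n T).
Definition bd (J : Jdg) : seq LMt := let: (G, _, T) := J in ext G T.

(* tilde-sigma; the case k = 0 is  l(Gamma') = l(ctx J) + 1. *)
Definition tsigma (J : Jdg) (F : seq LMt) : Jdg :=
  let: (G, t, T) := J in
  if size F == (size G).+1 then (ft F, t, last T F)
  else (sigma G F, t, T).

End CC.

From mathcomp Require Import all_boot.

(* Both parts reduce to one move: if J <=' (G1 |- o : T1) and the boundary
   (G1, T1) is <= (G2, T2), then transporting along tilde-sigma gives
   J <=' (G2 |- o : T2), since tilde-sigma of a judgement along a context one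
   entry longer simply replaces its context and type.  Part (1) applies this
   with G1 = G; part (2) obtains (G', T') <= (G, T) by symmetry. *)

Lemma tsigma_mkJ_ext (R : monad) (LM : lmodule R) n (G G' : seq (LMt LM))
    (o : R 'I_n) (T T' : LM 'I_n) :
  len G = n -> len G' = n ->
  tsigma (mkJ G o T) (ext G' (existT _ n T')) = mkJ G' o T'.
Proof.
rewrite /tsigma /mkJ /ext /len size_rcons => -> ->; rewrite eqxx.
by rewrite /ft size_rcons -cats1 take_size_cat // last_cat.
Qed.

Section Retarget.

Context {R : monad} {LM : lmodule R}.
Context {C : seq (LMt LM) -> Prop} {le : seq (LMt LM) -> seq (LMt LM) -> Prop}.
Context {Ct : Jdg LM -> Prop} {le' : Jdg LM -> Jdg LM -> Prop}.
Hypothesis le_C : forall G G', le G G' -> C G /\ C G'.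
Hypothesis le'_Ct : forall J J', le' J J' -> Ct J /\ Ct J'.
Hypothesis le'_trans : forall J1 J2 J3, le' J1 J2 -> le' J2 J3 -> le' J1 J3.
Hypothesis le'_tsigma : forall J F, Ct J -> C F -> le (bd J) F ->
  Ct (tsigma J F) /\ le' J (tsigma J F).

Lemma le'_retarget {n J} {G1 G2 : seq (LMt LM)} {o : R 'I_n} {T1 T2 : LM 'I_n} :
  len G1 = n -> len G2 = n ->
  le' J (mkJ G1 o T1) ->
  le (ext G1 (existT _ n T1)) (ext G2 (existT _ n T2)) ->
  le' J (mkJ G2 o T2).
Proof.
move=> hG1 hG2 hJ hle.
have [_ Ct1] := le'_Ct _ _ hJ.
have [_ CF] := le_C _ _ hle.
have [_] := le'_tsigma _ _ Ct1 CF hle.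
by rewrite tsigma_mkJ_ext // => /(le'_trans _ _ _ hJ).
Qed.

End Retarget.

Theorem lemma6p10 (R : monad) (LM : lmodule R)
  (C : seq (LMt LM) -> Prop) (le : seq (LMt LM) -> seq (LMt LM) -> Prop)
  (Ct : Jdg LM -> Prop) (le' : Jdg LM -> Jdg LM -> Prop)
  (* conditions on C and <= *)
  (C_ob : forall G, C G -> is_ob G)
  (C_ft : forall G, C G -> C (ft G))
  (le_C : forall G G', le G G' -> C G /\ C G')
  (le_trans : forall G1 G2 G3, le G1 G2 -> le G2 G3 -> le G1 G3)
  (le_len : forall G G', le G G' -> len G = len G')
  (le_sigma : forall G F, C G -> C F -> 0 < len G -> le (ft G) F ->
      C (sigma G F) /\ le G (sigma G F))
  (* conditions on tilde C and <=' *)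
  (Ct_ob : forall J, Ct J -> is_jdg J)
  (le'_Ct : forall J J', le' J J' -> Ct J /\ Ct J')
  (le'_trans : forall J1 J2 J3, le' J1 J2 -> le' J2 J3 -> le' J1 J3)
  (le'_bd : forall J J', le' J J' -> le (bd J) (bd J'))
  (le'_tsigma : forall J F, Ct J -> C F -> le (bd J) F ->
      Ct (tsigma J F) /\ le' J (tsigma J F)) :
  (forall (n : nat) (G G' : seq (LMt LM)) (o o' : R 'I_n) (T T' : LM 'I_n),
     is_ob G -> is_ob G' -> len G = n -> len G' = n ->
     le' (mkJ G o T) (mkJ G o' T) ->
     le (ext G (existT _ n T)) (ext G' (existT _ n T')) ->
     le' (mkJ G o T) (mkJ G' o' T'))
  /\
  ((forall G G', le G G' -> le G' G) ->
   forall (n : nat) (G G' : seq (LMt LM)) (o o' : R 'I_n) (T T' : LM 'I_n),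
     is_ob G -> is_ob G' -> len G = n -> len G' = n ->
     le' (mkJ G o T) (mkJ G' o' T') ->
     le' (mkJ G o T) (mkJ G o' T)).
Proof.
have retarget := le'_retarget le_C le'_Ct le'_trans le'_tsigma.
split.
- move=> n G G' o o' T T' _ _ hG hG' hJ hle.
  exact: retarget hG hG' hJ hle.
- move=> le_sym n G G' o o' T T' _ _ hG hG' hJ.
  exact: retarget hG' hG hJ (le_sym _ _ (le'_bd _ _ hJ)).
Qed.
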